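(* Consider a GND instance, a reply $\varrho$-oracle ($\varrho\ge1$), and a cost sharing mechanism $M$ whose induced GND game admits an $(A,B)$-bounded potential function and is $(\lambda,\mu)$-smooth with $\mu<1/(\varrho\epsilon_1^2)$, where $\epsilon_1=\frac{1+\epsilon}{1-\epsilon}$. Let $Q=\frac{2\epsilon_1NA}{1-\varrho\epsilon_1^2\mu}$, $T=\lceil Q\ln(ABN^{\max_j\alpha_j})\rceil$ and $T'=N\cdot T^2$. Run the randomized-selection variant of Alg-ABRD for $T'$ steps. Then with probability at least $1/2$ its output $p^{t^*}$ satisfies $$C(p^{t^*})\le\frac{2\varrho\epsilon_1^2\lambda}{1-\varrho\epsilon_1^2\mu}\cdot C^*.$$
   Context: GND instance: finite resource set $E$; requests $i \in [N]$, each with a reply collection $P_i \subseteq 2^E$ and a weight vector $w_i \in \mathbb{Z}_{\geq 1}^E$; constants $q \in \mathbb{Z}_{\ge 1}$, $\alpha_1,\dots,\alpha_q > 1$; for each $e$, $\sigma_e \geq 0$ and $\xi_{e,j} \geq 0$ (at least one $\xi_{e,j}>0$), and cost function $F_e(0)=0$, $F_e(l)=\sigma_e+\sum_j \xi_{e,j} l^{\alpha_j}$ for $l>0$. A strategy profile is $p=(p_1,\dots,p_N)\in P = P_1\times\dots\times P_N$; load $l_e^p=\sum_{i: e\in p_i} w_i(e)$; total cost $C(p)=\sum_e F_e(l_e^p)$; $C^*=\min_{p\in P} C(p)$. $(p'_i,p_{-i})$ is $p$ with the $i$-th coordinate replaced by $p'_i$. A reply $\varrho$-oracle, given a reply collection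 $R$ and tolls $\tau:E\to\mathbb{R}_{>0}$, returns $r \in R$ with $\sum_{e\in r}\tau(e) \le \varrho \sum_{e \in r'}\tau(e)$ for all $r'\in R$. A cost sharing mechanism (CSM) $M=\{f_{i,e}\}$ assigns cost shares $f_{i,e}(p) \geq 0$ with $\sum_i f_{i,e}(p) = F_e(l_e^p)$; it is separable and uniform: $f_{i,e}(p)=0$ if $e \notin p_i$, and $f_{i,e}(p)$ depends only on $w_i(e)$ and the multiset of weights of the other players using $e$. Individual cost $C_i(p)=\sum_e f_{i,e}(p)$. The game is $(\lambda,\mu)$-smooth ($\lambda>0$, $0<\mu<1$) if $\sum_i C_i(p'_i,p_{-i}) \le \lambda C(p') + \mu C(p)$ for all $p,p'$. $\Phi:P\to\mathbb{R}_{>0}$ is a potential function if $\Phi(p')-\Phi(p)=C_i(p')-C_i(p)$ whenever $p,p'$ differ only in coordinate $i$; it is $(A,B)$-bounded ($A,B\ge1$) if $\Phi(p)/A \le C(p) \le B\,\Phi(p)$ for all $p$. Randomized-selection variant of Alg-ABRD: fix small $\epsilon>0$. Values $\widetilde f_{i,e}(p)$ are fixed for all $i,e,p$ with $(1-\epsilon) f_{i,e}(p) \le \widetilde f_{i,e}(p) \le (1+\epsilon) f_{i,e}(p)$, and $\widetilde C_i(p)=\sum_e \widetilde f_{i,e}(p)$. Initial profile $p^0$: for each $i$, $p^0_i$ is the oracle's output on $P_i$ with tolls $\tau_i^0(e)=F_e(w_i(e))$. For $t=1,2,\dots$ up to the step budget: for every $i$ compute $p'_i$ with $\widetilde C_i(p'_i,p^{t-1}_{-i})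 \le \varrho\, \widetilde C_i(p''_i,p^{t-1}_{-i})$ for all $p''_i\in P_i$, and let $\delta_i^t=\widetilde C_i(p^{t-1}) - \epsilon_1 \widetilde C_i(p'_i,p^{t-1}_{-i})$. If $\delta_i^t \le 0$ for all $i$, set $p^t=p^{t-1}$ and stop. Otherwise draw $i\in[N]$ uniformly at random; if $\delta_i^t>0$ set $p^t=(p'_i,p^{t-1}_{-i})$, else $p^t=p^{t-1}$. Output a generated profile $p^{t^*}$ of minimum total cost. Probability is over the random player selections. *)

From HB Require Import structures.
From mathcomp Require Import all_boot all_order all_algebra.
From mathcomp Require Import all_classical all_reals all_analysis.
Set Implicit Arguments. Unset Strict Implicit. Unset Printing Implicit Defensive.
Import Order.TTheory GRing.Theory Num.Theory.
Local Open Scope ring_scope.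

(* Strategy profiles: p i is the reply (subset of resources) of request i. *)
Definition profile (E : finType) (N : nat) := {ffun 'I_N -> {set E}}.

Definition upd (E : finType) (N : nat) (p : profile E N) (i : 'I_N) (s : {set E})
  : profile E N := [ffun j => if j == i then s else p j].

Definition valid (E : finType) (N : nat) (P : 'I_N -> {set {set E}}) (p : profile E N)
  : bool := [forall i, p i \in P i].

Definition gnd_instance (R : realType) (E : finType) (N : nat)
  (P : 'I_N -> {set {set E}}) (w : 'I_N -> E -> nat) (q : nat)
  (alpha : 'I_q -> R) (sigma : E -> R) (xi : E -> 'I_q -> R) : Prop :=
  [/\ (0 < N)%N, forall i, (0 < #|P i|)%N, forall i e, (0 < w i e)%N, (0 < q)%N &
      [/\ forall j, 1 < alpha j, forall e, 0 <= sigma e,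
          forall e j, 0 <= xi e j & forall e, exists j, 0 < xi e j]].

Definition Fcost (R : realType) (E : finType) (q : nat) (alpha : 'I_q -> R)
  (sigma : E -> R) (xi : E -> 'I_q -> R) (e : E) (l : nat) : R :=
  if l == 0%N then 0 else sigma e + \sum_(j < q) xi e j * (l%:R `^ alpha j).

Definition load (E : finType) (N : nat) (w : 'I_N -> E -> nat) (p : profile E N) (e : E)
  : nat := (\sum_(i < N | e \in p i) w i e)%N.

Definition total_cost (R : realType) (E : finType) (N : nat) (w : 'I_N -> E -> nat)
  (q : nat) (alpha : 'I_q -> R) (sigma : E -> R) (xi : E -> 'I_q -> R)
  (p : profile E N) : R :=
  \sum_(e : E) Fcost alpha sigma xi e (load w p e).

Definition is_oracle (R : realType) (E : finType) (rho : R)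
  (O : {set {set E}} -> (E -> R) -> {set E}) : Prop :=
  forall (Rc : {set {set E}}) (tau : E -> R), (0 < #|Rc|)%N -> (forall e, 0 < tau e) ->
    O Rc tau \in Rc /\
    forall r', r' \in Rc -> \sum_(e in O Rc tau) tau e <= rho * \sum_(e in r') tau e.

Definition is_csm (R : realType) (E : finType) (N : nat) (P : 'I_N -> {set {set E}})
  (w : 'I_N -> E -> nat) (q : nat) (alpha : 'I_q -> R) (sigma : E -> R)
  (xi : E -> 'I_q -> R) (f : 'I_N -> E -> profile E N -> R) : Prop :=
  [/\ forall i e p, valid P p -> 0 <= f i e p,
      forall e p, valid P p -> \sum_(i < N) f i e p = Fcost alpha sigma xi e (load w p e),
      forall i e p, valid P p -> e \notin p i -> f i e p = 0 &
      forall i j e p p', valid P p -> valid P p' -> e \in p i -> e \in p' j ->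
        w i e = w j e ->
        perm_eq [seq w k e | k <- enum 'I_N & (k != i) && (e \in p k)]
                [seq w k e | k <- enum 'I_N & (k != j) && (e \in p' k)] ->
        f i e p = f j e p'].

Definition indiv_cost (R : realType) (E : finType) (N : nat)
  (f : 'I_N -> E -> profile E N -> R) (i : 'I_N) (p : profile E N) : R :=
  \sum_(e : E) f i e p.

Definition is_smooth (R : realType) (E : finType) (N : nat) (P : 'I_N -> {set {set E}})
  (w : 'I_N -> E -> nat) (q : nat) (alpha : 'I_q -> R) (sigma : E -> R)
  (xi : E -> 'I_q -> R) (f : 'I_N -> E -> profile E N -> R) (lam mu : R) : Prop :=
  [/\ 0 < lam, 0 < mu, mu < 1 &
    forall p p', valid P p -> valid P p' ->
      \sum_(i < N) indiv_cost f i (upd p i (p' i))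
        <= lam * total_cost w alpha sigma xi p' + mu * total_cost w alpha sigma xi p].

Definition is_potential (R : realType) (E : finType) (N : nat) (P : 'I_N -> {set {set E}})
  (f : 'I_N -> E -> profile E N -> R) (Phi : profile E N -> R) : Prop :=
  (forall p, valid P p -> 0 < Phi p) /\
  (forall p i s, valid P p -> s \in P i ->
     Phi (upd p i s) - Phi p = indiv_cost f i (upd p i s) - indiv_cost f i p).

Definition potential_bounded (R : realType) (E : finType) (N : nat)
  (P : 'I_N -> {set {set E}}) (w : 'I_N -> E -> nat) (q : nat) (alpha : 'I_q -> R)
  (sigma : E -> R) (xi : E -> 'I_q -> R) (Phi : profile E N -> R) (A B : R) : Prop :=
  [/\ 1 <= A, 1 <= B &
    forall p, valid P p ->
      Phi p / A <= total_cost w alpha sigma xi p <= B * Phi p].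

Definition eps1 (R : realType) (eps : R) : R := (1 + eps) / (1 - eps).

Definition approx_shares (R : realType) (E : finType) (N : nat) (P : 'I_N -> {set {set E}})
  (f ft : 'I_N -> E -> profile E N -> R) (eps : R) : Prop :=
  forall i e p, valid P p -> (1 - eps) * f i e p <= ft i e p <= (1 + eps) * f i e p.

(* Best responses p'_i computed at step t: br t i p is the p'_i computed at
   step t for request i when the current profile is p. *)
Definition approx_br (R : realType) (E : finType) (N : nat) (P : 'I_N -> {set {set E}})
  (ft : 'I_N -> E -> profile E N -> R) (rho : R)
  (br : nat -> 'I_N -> profile E N -> {set E}) : Prop :=
  forall t i p, valid P p ->
    br t i p \in P i /\
    forall s, s \in P i ->
      indiv_cost ft i (upd p i (br t i p)) <= rho * indiv_cost ft i (upd p i s).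

Definition init_profile (R : realType) (E : finType) (N : nat) (P : 'I_N -> {set {set E}})
  (w : 'I_N -> E -> nat) (q : nat) (alpha : 'I_q -> R) (sigma : E -> R)
  (xi : E -> 'I_q -> R) (O : {set {set E}} -> (E -> R) -> {set E}) : profile E N :=
  [ffun i => O (P i) (fun e => Fcost alpha sigma xi e (w i e))].

Definition delta (R : realType) (E : finType) (N : nat)
  (ft : 'I_N -> E -> profile E N -> R) (br : nat -> 'I_N -> profile E N -> {set E})
  (eps : R) (t : nat) (i : 'I_N) (p : profile E N) : R :=
  indiv_cost ft i p - eps1 eps * indiv_cost ft i (upd p i (br t i p)).

(* One step t of the randomized-selection Alg-ABRD with selected player i;
   the state is (current profile, has the algorithm stopped). *)
Definition abrd_step (R : realType) (E : finType) (N : nat)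
  (ft : 'I_N -> E -> profile E N -> R) (br : nat -> 'I_N -> profile E N -> {set E})
  (eps : R) (t : nat) (i : 'I_N) (st : profile E N * bool) : profile E N * bool :=
  let: (p, stopped) := st in
  if stopped then (p, true)
  else if [forall j, delta ft br eps t j p <= 0] then (p, true)
  else if 0 < delta ft br eps t i p then (upd p i (br t i p), false)
  else (p, false).

Fixpoint abrd_run (R : realType) (E : finType) (N : nat)
  (ft : 'I_N -> E -> profile E N -> R) (br : nat -> 'I_N -> profile E N -> {set E})
  (eps : R) (t : nat) (st : profile E N * bool) (cs : seq 'I_N) : seq (profile E N) :=
  match cs with
  | [::] => [::]
  | i :: cs' => let st' := abrd_step ft br eps t i st in
                st'.1 :: abrd_run ft br eps t.+1 st' cs'
  end.

Definition generated (R : realType) (E : finType) (N : nat)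
  (ft : 'I_N -> E -> profile E N -> R) (br : nat -> 'I_N -> profile E N -> {set E})
  (eps : R) (p0 : profile E N) (cs : seq 'I_N) : seq (profile E N) :=
  p0 :: abrd_run ft br eps 1 (p0, false) cs.

(* C(p^{t^*}): the minimum total cost of a generated profile. *)
Definition output_cost (R : realType) (E : finType) (N : nat) (w : 'I_N -> E -> nat)
  (q : nat) (alpha : 'I_q -> R) (sigma : E -> R) (xi : E -> 'I_q -> R)
  (ft : 'I_N -> E -> profile E N -> R) (br : nat -> 'I_N -> profile E N -> {set E})
  (eps : R) (p0 : profile E N) (cs : seq 'I_N) : R :=
  \big[Num.min/total_cost w alpha sigma xi p0]_(p <- generated ft br eps p0 cs)
     total_cost w alpha sigma xi p.

(* max_j alpha_j (q >= 1 and alpha_j > 1, so starting the max at 0 is harmless) *)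
Definition alpha_max (R : realType) (q : nat) (alpha : 'I_q -> R) : R :=
  \big[Num.max/0]_(j < q) alpha j.

Definition Qpar (R : realType) (N : nat) (rho A mu eps : R) : R :=
  2 * eps1 eps * N%:R * A / (1 - rho * eps1 eps ^+ 2 * mu).

Definition Tpar (R : realType) (N q : nat) (alpha : 'I_q -> R) (rho A B mu eps : R) : nat :=
  `|Num.ceil (Qpar N rho A mu eps * ln (A * B * (N%:R `^ alpha_max alpha)))|%N.

Definition Tprime (R : realType) (N q : nat) (alpha : 'I_q -> R) (rho A B mu eps : R) : nat :=
  (N * (Tpar N alpha rho A B mu eps) ^ 2)%N.

(* Probability (uniform independent selections in [N] at each of the Tp steps)
   that the output cost is at most K * C^*. *)
Definition success_prob (R : realType) (E : finType) (N : nat) (P : 'I_N -> {set {set E}})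
  (w : 'I_N -> E -> nat) (q : nat) (alpha : 'I_q -> R) (sigma : E -> R)
  (xi : E -> 'I_q -> R) (ft : 'I_N -> E -> profile E N -> R)
  (br : nat -> 'I_N -> profile E N -> {set E}) (eps : R) (p0 : profile E N)
  (Tp : nat) (K : R) : R :=
  #|[set c : {ffun 'I_Tp -> 'I_N} |
      [forall popt : profile E N, valid P popt ==>
         (output_cost w alpha sigma xi ft br eps p0 [seq c k | k <- enum 'I_Tp]
            <= K * total_cost w alpha sigma xi popt)]]|%:R
  / (N ^ Tp)%:R.

From HB Require Import structures.
From mathcomp Require Import all_boot all_order all_algebra.
From mathcomp Require Import all_classical all_reals all_analysis.
From mathcomp Require Import ring lra zify.
Set Implicit Arguments. Unset Strict Implicit. Unset Printing Implicit Defensive.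
Import Order.TTheory GRing.Theory Num.Theory.
Local Open Scope ring_scope.

(* Fix a valid reference profile p' and call a profile p expensive when C(p) > K C(p').
   Summing the approximate improvements delta_i over all players and using smoothness
   with respect to p' shows that Alg-ABRD cannot stop at an expensive profile, and that
   the move of a uniformly chosen player decreases the potential by a factor 1 - 1/Q in
   expectation.  Hence the potential summed over the selection sequences whose generated
   profiles all stay expensive decays like (N (1 - 1/Q))^t.  Since
   C(p^0) <= rho N^(alpha_max + 1) C(p') and the potential is (A,B)-bounded, Markov's
   inequality shows that after N T steps at most half of the selection sequences keep
   every generated profile expensive; p' is finally taken to be an optimal profile. *)

Section Trajectories.
Variables (R : numDomainType) (S : Type) (I : finType) (step : nat -> I -> S -> S).

Fixpoint trajectory (t : nat) (s : S) (cs : seq I) : seq S :=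
  if cs is i :: cs' then step t i s :: trajectory t.+1 (step t i s) cs' else [::].

Lemma sum_ffunS n (F : seq I -> R) :
  \sum_(c : {ffun 'I_n.+1 -> I}) F (codom c) =
  \sum_(i : I) \sum_(c : {ffun 'I_n -> I}) F (i :: codom c).
Proof.
rewrite pair_big /=.
pose cons_ffun (x : I * {ffun 'I_n -> I}) : {ffun 'I_n.+1 -> I} :=
  [ffun k => if unlift ord0 k is Some k' then x.2 k' else x.1].
pose uncons_ffun (c : {ffun 'I_n.+1 -> I}) := (c ord0, [ffun k => c (lift ord0 k)]).
rewrite (reindex cons_ffun); last first.
  exists uncons_ffun => [[i c] _ | c _].
    rewrite /uncons_ffun /cons_ffun /= ffunE unlift_none; congr pair.
    by apply/ffunP => k; rewrite !ffunE liftK.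
  apply/ffunP => k; rewrite /cons_ffun /uncons_ffun ffunE.
  by case: unliftP => [k'|] -> /=; rewrite ?ffunE.
apply: eq_bigr => -[i c] _; congr F.
rewrite /codom /image_mem enum_ordSl /= ffunE unlift_none -map_comp.
by congr cons; apply: eq_map => k /=; rewrite ffunE liftK.
Qed.

Variables (G : pred S) (W : S -> R).

Definition run_weight n t s : R :=
  \sum_(c : {ffun 'I_n -> I})
    (if all G (trajectory t s (codom c)) then W (last s (trajectory t s (codom c)))
     else 0).

Lemma run_weight0 t s : G s -> run_weight 0 t s = W s.
Proof.
move=> Gs; rewrite /run_weight (eq_bigr (fun=> W s)) => [|c _].
  by rewrite sumr_const card_ffun !card_ord.
by have -> : codom c = [::] by apply: size0nil; rewrite size_codom card_ord.
Qed.

Lemma run_weightS n t s :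
  run_weight n.+1 t s =
  \sum_i (if G (step t i s) then run_weight n t.+1 (step t i s) else 0).
Proof.
pose F cs := if all G (trajectory t s cs) then W (last s (trajectory t s cs)) else 0.
rewrite /run_weight (sum_ffunS n F); apply: eq_bigr => i _ /=.
by rewrite /F /=; case: ifP => //= _; rewrite big1.
Qed.

Variable c : R.
Hypotheses (c_ge0 : 0 <= c)
  (W_step_ge0 : forall t i s, G s -> 0 <= W (step t i s))
  (sum_W_step_le : forall t s, G s -> \sum_i W (step t i s) <= c * W s).

Lemma run_weight_le n t s : G s -> run_weight n t s <= c ^+ n * W s.
Proof.
elim: n t s => [|n IHn] t s Gs; first by rewrite run_weight0 ?mul1r.
rewrite run_weightS exprSr -mulrA.
apply: le_trans (ler_wpM2l (exprn_ge0 n c_ge0) (sum_W_step_le t Gs)).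
rewrite mulr_sumr; apply: ler_sum => i _.
case: ifP => [/IHn //|_].
exact: mulr_ge0 (exprn_ge0 n c_ge0) (W_step_ge0 t i Gs).
Qed.

(* Markov's inequality for the weight of the runs staying in [G]. *)
Lemma card_runs_in_le (m : R) n t s : G s -> (forall s', G s' -> m <= W s') ->
  #|[set cs : {ffun 'I_n -> I} | all G (trajectory t s (codom cs))]|%:R * m
    <= c ^+ n * W s.
Proof.
move=> Gs m_le; apply: le_trans (run_weight_le n t Gs).
rewrite mulr_natl -sumr_const big_mkcond; apply: ler_sum => cs _.
rewrite inE; case: ifP => // allG; apply: m_le.
move: (trajectory t s (codom cs)) allG => l.
by elim: l s Gs => [|x l IHl] //= s0 _ /andP[Gx]; apply: IHl.
Qed.

End Trajectories.

Section Numeric.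
Variable R : realType.
Implicit Types (x eps : R).

Lemma eps1_ge1 eps : 0 <= eps < 1 -> 1 <= eps1 eps.
Proof. by case/andP=> e0 e1; rewrite /eps1 ler_pdivlMr; lra. Qed.

Lemma eps1_mul_1subr eps : eps < 1 -> eps1 eps * (1 - eps) = 1 + eps.
Proof. by move=> e1; rewrite /eps1 mulfVK //; lra. Qed.

Lemma le_absz_ceil x : x <= `|Num.ceil x|%:R.
Proof. by rewrite natr_absz; apply: le_trans (ceil_ge x) _; rewrite ler_int ler_norm. Qed.

Lemma expr_1subr_le_expR x n : x <= 1 -> (1 - x) ^+ n <= expR (- (n%:R * x)).
Proof.
move=> x_le1; rewrite -mulrN expRM_natl.
by apply: lerXn2r; rewrite ?nnegrE ?expR_ge0 ?subr_ge0 //; have := expR_ge1Dx (- x); lra.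
Qed.

Lemma expr_1subV_mul_le1 (Q L : R) (N T n : nat) :
  1 <= Q -> (0 < N)%N -> N%:R <= L -> Q * ln L <= T%:R -> (N * T <= n)%N ->
  (1 - Q^-1) ^+ n * L * N%:R <= 1.
Proof.
move=> Q_ge1 N_gt0 N_le_L QlnL_le nNT.
have L_gt0 : 0 < L by apply: lt_le_trans N_le_L; rewrite ltr0n.
have decay : (1 - Q^-1) ^+ n <= (L ^+ N)^-1.
  have Qinv_le1 : Q^-1 <= 1 by rewrite invf_le1 //; lra.
  apply: le_trans (expr_1subr_le_expR n Qinv_le1) _.
  have -> : (L ^+ N)^-1 = expR (- (N%:R * ln L)) by rewrite expRN expRM_natl lnK.
  rewrite ler_expR lerN2.
  have lnL_le : ln L <= Q^-1 * T%:R by rewrite ler_pdivlMl //; lra.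
  apply: le_trans (ler_wpM2l (ler0n _ N) lnL_le) _.
  rewrite mulrCA mulrC ler_wpM2r ?invr_ge0 //; first lra.
  by rewrite -natrM ler_nat.
have N_le : N%:R <= L ^+ N.-1.
  have [N_gt1|N_le1] := ltnP 1 N; last by have -> : N = 1%N by lia.
  have L_ge1 : 1 <= L by apply: le_trans N_le_L; rewrite ler1n.
  by apply: le_trans N_le_L (ler_eXnr _ L_ge1); rewrite -ltnS prednK.
apply: le_trans (ler_wpM2r (ler0n _ N) (ler_wpM2r (ltW L_gt0) decay)) _.
apply: le_trans (ler_wpM2l _ N_le) _; first by rewrite mulr_ge0 ?invr_ge0 ?exprn_ge0 ?ltW.
by rewrite -mulrA -exprS prednK // mulVf // expf_neq0 // gt_eqF.
Qed.

End Numeric.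

Lemma valid_upd (E : finType) (N : nat) (P : 'I_N -> {set {set E}}) p i s :
  valid P p -> s \in P i -> valid P (upd p i s).
Proof.
move=> /forallP p_valid s_in; apply/forallP => j; rewrite ffunE.
by case: eqP => [->|].
Qed.

Lemma upd_id (E : finType) (N : nat) (p : profile E N) i : upd p i (p i) = p.
Proof. by apply/ffunP => j; rewrite ffunE; case: eqP => [->|]. Qed.

Lemma exchange_sum_replies (V : nmodType) (E : finType) (N : nat) (p : profile E N)
    (G : 'I_N -> E -> V) :
  \sum_i \sum_(e in p i) G i e = \sum_e \sum_(i | e \in p i) G i e.
Proof. by rewrite (exchange_big_dep predT). Qed.

Section CostFunctions.
Variables (R : realType) (E : finType) (N : nat) (P : 'I_N -> {set {set E}})
  (w : 'I_N -> E -> nat) (q : nat) (alpha : 'I_q -> R) (sigma : E -> R)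
  (xi : E -> 'I_q -> R).
Hypothesis gnd : gnd_instance P w alpha sigma xi.
Implicit Types (p : profile E N).

Local Notation F := (Fcost alpha sigma xi).
Local Notation C := (total_cost w alpha sigma xi).
Local Notation amax := (alpha_max alpha).

Lemma Fcost_ge0 e l : 0 <= F e l.
Proof.
case: gnd => _ _ _ _ [_ sigma_ge0 xi_ge0 _]; rewrite /Fcost; case: eqP => // _.
by rewrite addr_ge0 // sumr_ge0 // => j _; rewrite mulr_ge0 ?powR_ge0.
Qed.

Lemma Fcost_gt0 e l : (0 < l)%N -> 0 < F e l.
Proof.
case: gnd => _ _ _ _ [_ sigma_ge0 xi_ge0 xi_pos] l_gt0; have [j0 xi_j0] := xi_pos e.
rewrite /Fcost (negbTE (lt0n_neq0 l_gt0)) (bigD1 j0) //= addrCA.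
rewrite ltr_wpDr ?addr_ge0 ?sumr_ge0 // => [j _|]; first by rewrite mulr_ge0 ?powR_ge0.
by rewrite mulr_gt0 // powR_gt0 // ltr0n.
Qed.

Lemma Fcost_le e : {homo F e : l l' / (l <= l')%N >-> l <= l'}.
Proof.
move=> l l' le_ll'; have [-> | l_gt0] := posnP l; first by rewrite /Fcost eqxx Fcost_ge0.
case: gnd => _ _ _ _ [alpha_gt1 _ xi_ge0 _].
rewrite /Fcost (negbTE (lt0n_neq0 l_gt0)) (negbTE (lt0n_neq0 (leq_trans l_gt0 le_ll'))).
rewrite lerD2l; apply: ler_sum => j _; apply: ler_wpM2l => //.
by apply: ge0_ler_powR; rewrite ?nnegrE ?ler0n ?ler_nat //; have := alpha_gt1 j; lra.
Qed.

Lemma alpha_le_max j : alpha j <= amax.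
Proof. exact: le_bigmax. Qed.

Lemma alpha_max_ge1 : 1 <= amax.
Proof.
case: gnd => _ _ _ q_gt0 [alpha_gt1 _ _ _].
by apply: le_trans (alpha_le_max (Ordinal q_gt0)); apply: ltW.
Qed.

Lemma natr_le_powR_alpha_max k : (0 < k)%N -> k%:R <= k%:R `^ amax.
Proof.
move=> k_gt0; rewrite -[X in X <= _](powRr1 (ler0n _ k)).
by apply: (ler_powR (_ : 1 <= k%:R)); rewrite ?ler1n ?alpha_max_ge1.
Qed.

Lemma Fcost_mulnl e k l : (0 < k)%N -> F e (k * l) <= k%:R `^ amax * F e l.
Proof.
move=> k_gt0; have [-> | l_gt0] := posnP l; first by rewrite muln0 /Fcost eqxx mulr0.
case: gnd => _ _ _ _ [_ sigma_ge0 xi_ge0 _].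
rewrite /Fcost muln_eq0 !(negbTE (lt0n_neq0 _)) //= mulrDr mulr_sumr.
apply: lerD.
  by rewrite ler_peMl // (le_trans _ (natr_le_powR_alpha_max k_gt0)) ?ler1n.
apply: ler_sum => j _; rewrite natrM powRM // mulrCA ler_wpM2r ?mulr_ge0 ?powR_ge0 //.
by apply: (ler_powR (_ : 1 <= k%:R)); rewrite ?ler1n ?alpha_le_max.
Qed.

Lemma Fcost_load_le p e :
  F e (load w p e) <= N%:R `^ amax * \sum_(i | e \in p i) F e (w i e).
Proof.
case: (pickP (fun i => e \in p i)) => [i1 e_in_i1 | no_user]; last first.
  rewrite /load big_pred0 // /Fcost eqxx mulr_ge0 ?powR_ge0 // sumr_ge0 // => i _.
  exact: Fcost_ge0.
have [i0 e_in_i0 max_i0] := @arg_maxnP _ i1 (fun i => e \in p i) (fun i => w i e) e_in_i1.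
have load_le : (load w p e <= N * w i0 e)%N.
  apply: (@leq_trans (\sum_(i < N) w i0 e)); last by rewrite sum_nat_const card_ord.
  rewrite /load [X in (_ <= X)%N](bigID (fun i => e \in p i)) /=.
  by apply: leq_trans (leq_addr _ _); apply: leq_sum.
have N_gt0 : (0 < N)%N by case: gnd.
apply: le_trans (Fcost_le e load_le) _.
apply: le_trans (Fcost_mulnl e (w i0 e) N_gt0) _.
rewrite ler_wpM2l ?powR_ge0 // (bigD1 i0) //= lerDl sumr_ge0 // => i _.
exact: Fcost_ge0.
Qed.

Lemma sum_replies_le_cost p : \sum_i \sum_(e in p i) F e (w i e) <= N%:R * C p.
Proof.
rewrite exchange_sum_replies /total_cost mulr_sumr; apply: ler_sum => e _.
apply: (@le_trans _ _ (\sum_(i | e \in p i) F e (load w p e))).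
  by apply: ler_sum => i e_in; apply: Fcost_le; rewrite /load (bigD1 i) //= leq_addr.
have -> : N%:R * F e (load w p e) = \sum_(i < N) F e (load w p e).
  by rewrite sumr_const card_ord mulr_natl.
by rewrite [X in _ <= X](bigID (fun i => e \in p i)) /= lerDl sumr_ge0 // => i _; apply: Fcost_ge0.
Qed.

Variables (rho : R) (O : {set {set E}} -> (E -> R) -> {set E}).
Hypothesis oracle : is_oracle rho O.

Local Notation p0 := (init_profile P w alpha sigma xi O).

Lemma init_profile_spec i :
  p0 i \in P i /\
  forall r, r \in P i -> \sum_(e in p0 i) F e (w i e) <= rho * \sum_(e in r) F e (w i e).
Proof.
case: gnd => _ P_ne0 w_gt0 _ _; rewrite ffunE.
by apply: oracle => // e; apply: Fcost_gt0.
Qed.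

Lemma init_profile_valid : valid P p0.
Proof. by apply/forallP => i; case: (init_profile_spec i). Qed.

Lemma init_profile_cost_le p : 0 <= rho -> valid P p ->
  C p0 <= rho * N%:R `^ amax * N%:R * C p.
Proof.
move=> rho_ge0 /forallP p_valid.
have replies_le : \sum_i \sum_(e in p0 i) F e (w i e)
                    <= rho * \sum_i \sum_(e in p i) F e (w i e).
  by rewrite mulr_sumr; apply: ler_sum => i _; apply: (init_profile_spec i).2.
have -> : rho * N%:R `^ amax * N%:R * C p = N%:R `^ amax * (rho * (N%:R * C p)) by ring.
apply: (@le_trans _ _ (N%:R `^ amax * \sum_i \sum_(e in p0 i) F e (w i e))).
  by rewrite exchange_sum_replies mulr_sumr; apply: ler_sum => e _; apply: Fcost_load_le.
rewrite ler_wpM2l ?powR_ge0 //; apply: le_trans replies_le _.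
by rewrite ler_wpM2l // sum_replies_le_cost.
Qed.

End CostFunctions.

Lemma abrd_runE (R : realType) (E : finType) (N : nat)
    (ft : 'I_N -> E -> profile E N -> R) (br : nat -> 'I_N -> profile E N -> {set E})
    (eps : R) t st cs :
  abrd_run ft br eps t st cs = map fst (trajectory (abrd_step ft br eps) t st cs).
Proof. by elim: cs t st => //= i cs IHcs t st; rewrite IHcs. Qed.

Lemma output_cost_le (R : realType) (E : finType) (N : nat) (w : 'I_N -> E -> nat)
    (q : nat) (alpha : 'I_q -> R) (sigma : E -> R) (xi : E -> 'I_q -> R)
    (ft : 'I_N -> E -> profile E N -> R) (br : nat -> 'I_N -> profile E N -> {set E})
    (eps : R) p0 cs p :
  p \in generated ft br eps p0 cs ->
  output_cost w alpha sigma xi ft br eps p0 cs <= total_cost w alpha sigma xi p.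
Proof.
rewrite /output_cost; elim: (generated _ _ _ _ _) => // p' s IHs.
by rewrite inE big_cons ge_min => /orP[/eqP <-|/IHs ->]; rewrite ?lexx ?orbT.
Qed.

Section ABRD.
Variables (R : realType) (E : finType) (N : nat) (P : 'I_N -> {set {set E}})
  (w : 'I_N -> E -> nat) (q : nat) (alpha : 'I_q -> R) (sigma : E -> R)
  (xi : E -> 'I_q -> R) (rho : R) (O : {set {set E}} -> (E -> R) -> {set E})
  (f : 'I_N -> E -> profile E N -> R) (Phi : profile E N -> R)
  (A B lam mu eps : R) (ft : 'I_N -> E -> profile E N -> R)
  (br : nat -> 'I_N -> profile E N -> {set E}).
Hypotheses (gnd : gnd_instance P w alpha sigma xi) (rho_ge1 : 1 <= rho)
  (oracle : is_oracle rho O) (csm : is_csm P w alpha sigma xi f)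
  (potential : is_potential P f Phi)
  (Phi_bounded : potential_bounded P w alpha sigma xi Phi A B)
  (smooth : is_smooth P w alpha sigma xi f lam mu) (eps_range : 0 < eps < 1)
  (mu_small : mu < 1 / (rho * eps1 eps ^+ 2))
  (approx : approx_shares P f ft eps) (br_spec : approx_br P ft rho br).
Variable ps : profile E N.
Hypothesis ps_valid : valid P ps.

Implicit Types (p : profile E N) (i : 'I_N).
Local Notation C := (total_cost w alpha sigma xi).
Local Notation Ci := (indiv_cost f).
Local Notation Cti := (indiv_cost ft).
Local Notation e1 := (eps1 eps).
Local Notation r := (rho * eps1 eps ^+ 2).
Local Notation K := (2 * rho * eps1 eps ^+ 2 * lam / (1 - r * mu)).
Local Notation Q := (Qpar N rho A mu eps).
Local Notation step := (abrd_step ft br eps).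
Local Notation p0 := (init_profile P w alpha sigma xi O).

Let eps_gt0 : 0 < eps. Proof. by case/andP: eps_range. Qed.
Let eps_lt1 : eps < 1. Proof. by case/andP: eps_range. Qed.
Let e1_ge1 : 1 <= e1. Proof. by apply: eps1_ge1; rewrite ltW ?eps_gt0 ?eps_lt1. Qed.
Let e1_gt0 : 0 < e1. Proof. exact: lt_le_trans ltr01 e1_ge1. Qed.

Lemma r_ge1 : 1 <= r.
Proof. by rewrite -[1]mulr1 ler_pM ?ler01 // expr_ge1 ?(ltW e1_gt0) ?e1_ge1. Qed.

Lemma one_sub_rmu_gt0 : 0 < 1 - r * mu.
Proof.
have r_gt0 : 0 < r by have := r_ge1; lra.
by have := mu_small; rewrite ltr_pdivlMr // mulrC; lra.
Qed.

Lemma total_cost_ge0 p : 0 <= C p.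
Proof. by apply: sumr_ge0 => e _; apply: (Fcost_ge0 gnd). Qed.

Lemma total_cost_indiv p : valid P p -> C p = \sum_i Ci i p.
Proof.
case: csm => _ sum_shares _ _ p_valid; rewrite /total_cost /indiv_cost exchange_big /=.
by apply: eq_bigr => e _; rewrite sum_shares.
Qed.

Lemma potential_le_cost p : valid P p -> Phi p <= A * C p.
Proof.
have [A_ge1 _ Phi_C] := Phi_bounded; move/Phi_C/andP => [+ _].
by rewrite ler_pdivrMr ?(lt_le_trans ltr01) // mulrC.
Qed.

Lemma approx_indiv_cost i p : valid P p ->
  (1 - eps) * Ci i p <= Cti i p <= (1 + eps) * Ci i p.
Proof.
move=> p_valid; rewrite /indiv_cost !mulr_sumr.
by apply/andP; split; apply: ler_sum => e _; case/andP: (approx i e p_valid).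
Qed.

Lemma potential_br_le t i p : valid P p ->
  (1 + eps) * (Phi (upd p i (br t i p)) - Phi p) <= - delta ft br eps t i p.
Proof.
move=> p_valid; have [br_in _] := br_spec t i p_valid.
have upd_valid := valid_upd p_valid br_in.
have /andP[lo _] := approx_indiv_cost i upd_valid.
have /andP[_ hi] := approx_indiv_cost i p_valid.
have lo' : (1 + eps) * Ci i (upd p i (br t i p)) <= e1 * Cti i (upd p i (br t i p)).
  by rewrite -(eps1_mul_1subr eps_lt1) -mulrA ler_wpM2l // ltW // e1_gt0.
have [_ Phi_diff] := potential.
rewrite Phi_diff // /delta; lra.
Qed.

Lemma sum_delta_ge t p : valid P p ->
  (1 - eps) * ((1 - r * mu) * C p - r * lam * C ps) <= \sum_i delta ft br eps t i p.
Proof.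
move=> p_valid; rewrite /delta sumrB -mulr_sumr.
have cost_le : (1 - eps) * C p <= \sum_i Cti i p.
  rewrite total_cost_indiv // mulr_sumr; apply: ler_sum => i _.
  by case/andP: (approx_indiv_cost i p_valid).
have br_le : \sum_i Cti i (upd p i (br t i p)) <=
             rho * (1 + eps) * \sum_i Ci i (upd p i (ps i)).
  rewrite mulr_sumr; apply: ler_sum => i _.
  have ps_i : ps i \in P i by move/forallP: ps_valid.
  apply: le_trans ((br_spec t i p_valid).2 _ ps_i) _; rewrite -mulrA ler_wpM2l ?(le_trans ler01) //.
  by case/andP: (approx_indiv_cost i (valid_upd p_valid ps_i)).
have smooth_le : \sum_i Ci i (upd p i (ps i)) <= lam * C ps + mu * C p.
  by case: smooth => _ _ _; apply.
have br_le' : e1 * \sum_i Cti i (upd p i (br t i p)) <=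
              r * (1 - eps) * (lam * C ps + mu * C p).
  have -> : r * (1 - eps) = e1 * (rho * (1 + eps)).
    by rewrite -(eps1_mul_1subr eps_lt1) expr2; ring.
  rewrite -mulrA ler_wpM2l ?(ltW e1_gt0) //; apply: le_trans br_le _.
  apply: ler_wpM2l smooth_le; rewrite mulr_ge0 ?(le_trans ler01) //; have := eps_gt0; lra.
lra.
Qed.

Lemma ratio_gt0 : 0 < K.
Proof.
have [lam_gt0 _ _ _] := smooth; have r_gt0 : 0 < r by have := r_ge1; lra.
have -> : 2 * rho * e1 ^+ 2 * lam = 2 * (r * lam) by ring.
by rewrite divr_gt0 ?one_sub_rmu_gt0 // mulr_gt0 // mulr_gt0.
Qed.

Definition expensive p := K * C ps < C p.

Lemma expensive_sum_delta t p : valid P p -> expensive p ->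
  (1 - eps) * (1 - r * mu) * C p / 2 <= \sum_i delta ft br eps t i p.
Proof.
move=> p_valid p_exp; apply: le_trans (sum_delta_ge t p_valid).
have gap : 2 * (r * lam * C ps) <= (1 - r * mu) * C p.
  move: p_exp => /ltW; rewrite /expensive mulrAC ler_pdivrMr ?one_sub_rmu_gt0 //.
  by rewrite mulrC; lra.
have := ler_wpM2l (_ : 0 <= 1 - eps) gap; rewrite subr_ge0 ltW ?eps_lt1 // => /(_ isT).
lra.
Qed.

Lemma expensive_cost_gt0 p : expensive p -> 0 < C p.
Proof.
exact/le_lt_trans/mulr_ge0/total_cost_ge0/ltW/ratio_gt0.
Qed.

Lemma abrd_step_expensive t i p : valid P p -> expensive p ->
  step t i (p, false) = (if 0 < delta ft br eps t i p then upd p i (br t i p) else p, false).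
Proof.
move=> p_valid p_exp; rewrite /abrd_step /=.
suff -> : [forall j, delta ft br eps t j p <= 0] = false by case: ifP.
apply/negbTE/forallP => all_le0.
have sum_le0 : \sum_i delta ft br eps t i p <= 0 by apply: sumr_le0 => j _.
have gain_gt0 : 0 < (1 - eps) * (1 - r * mu) * C p / 2.
  rewrite divr_gt0 // mulr_gt0 ?expensive_cost_gt0 // mulr_gt0 ?one_sub_rmu_gt0 //.
  by rewrite subr_gt0 eps_lt1.
by have := expensive_sum_delta t p_valid p_exp; lra.
Qed.

Lemma Qpar_ge1 : 1 <= Q.
Proof.
have [A_ge1 _ _] := Phi_bounded; have [N_gt0 _ _ _ _] := gnd.
have [_ mu_gt0 _ _] := smooth; have rmu_ge0 : 0 <= r * mu by have := r_ge1; nra.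
rewrite /Qpar ler_pdivlMr ?one_sub_rmu_gt0 // mul1r.
have : 1 <= e1 * N%:R * A by rewrite mulr_ege1 // mulr_ege1 ?e1_ge1 ?ler1n.
lra.
Qed.

Lemma potential_step_sum_le t p : valid P p -> expensive p ->
  \sum_i Phi (step t i (p, false)).1 <= N%:R * (1 - Q^-1) * Phi p.
Proof.
move=> p_valid p_exp; have [A_ge1 _ _] := Phi_bounded; have [N_gt0 _ _ _ _] := gnd.
have drop i : (1 + eps) * (Phi (step t i (p, false)).1 - Phi p) <= - delta ft br eps t i p.
  rewrite abrd_step_expensive //=; case: ifP => [_|/negbT]; first exact: potential_br_le.
  by rewrite subrr mulr0 oppr_ge0 leNgt.
have sum_drop : (1 + eps) * (\sum_i Phi (step t i (p, false)).1 - N%:R * Phi p)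
                  <= - \sum_i delta ft br eps t i p.
  rewrite -sumrN; apply: le_trans (ler_sum _ (fun i _ => drop i)).
  by rewrite -mulr_sumr sumrB sumr_const card_ord mulr_natl.
set D := _ - _ in sum_drop.
have Phi_le := potential_le_cost p_valid.
have e1D : e1 * D <= - ((1 - r * mu) * C p / 2).
  rewrite -(ler_pM2l (_ : 0 < 1 - eps)) ?subr_gt0 ?eps_lt1 //.
  rewrite mulrA [(1 - eps) * e1]mulrC eps1_mul_1subr ?eps_lt1 //.
  by have := expensive_sum_delta t p_valid p_exp; lra.
have scaled_drop : 2 * e1 * A * D <= - ((1 - r * mu) * Phi p).
  have := ler_wpM2l (_ : 0 <= 2 * A) e1D; have := ler_wpM2l (ltW one_sub_rmu_gt0) Phi_le.
  lra.
have scale_gt0 : 0 < 2 * e1 * A by have := e1_gt0; nra.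
have -> : N%:R * (1 - Q^-1) * Phi p = N%:R * Phi p - (1 - r * mu) * Phi p / (2 * e1 * A).
  rewrite /Qpar; field.
  by rewrite pnatr_eq0 -lt0n N_gt0 !gt_eqF ?one_sub_rmu_gt0 ?e1_gt0 ?(lt_le_trans ltr01).
have : D <= - ((1 - r * mu) * Phi p) / (2 * e1 * A) by rewrite ler_pdivlMr // mulrC.
rewrite /D; lra.
Qed.

Definition expensive_running (st : profile E N * bool) :=
  [&& valid P st.1, expensive st.1 & ~~ st.2].

Lemma abrd_step_valid t i st : valid P st.1 -> valid P (step t i st).1.
Proof.
case: st => p b /= p_valid; rewrite /abrd_step; case: b => //=; do 2 case: ifP => //= _.
by case: (br_spec t i p_valid) => br_in _; apply: valid_upd.
Qed.

Lemma all_expensive_running t st cs : expensive_running st ->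
  all expensive (abrd_run ft br eps t st cs) ->
  all expensive_running (trajectory step t st cs).
Proof.
rewrite abrd_runE all_map.
elim: cs t st => //= i cs IHcs t [p b] /and3P[p_valid p_exp].
rewrite /= in p_valid p_exp *; move/negPf => -> /andP[exp_step].
have running : expensive_running (step t i (p, false)).
  by rewrite /expensive_running abrd_step_valid // exp_step abrd_step_expensive.
by rewrite running; apply: IHcs.
Qed.

Lemma card_expensive_runs_le n t p : valid P p -> expensive p ->
  #|[set cs : {ffun 'I_n -> 'I_N} |
      all expensive (abrd_run ft br eps t (p, false) (codom cs))]|%:R * (K * C ps)
    <= B * ((N%:R * (1 - Q^-1)) ^+ n * Phi p).
Proof.
move=> p_valid p_exp.
have [_ B_ge1 Phi_C] := Phi_bounded.
have running0 : expensive_running (p, false) by rewrite /expensive_running p_valid p_exp.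
have rate_ge0 : 0 <= N%:R * (1 - Q^-1).
  by rewrite mulr_ge0 // subr_ge0 invf_le1 ?Qpar_ge1 // (lt_le_trans ltr01 Qpar_ge1).
have W_step_ge0 t' i st : expensive_running st -> 0 <= Phi (step t' i st).1.
  by case/andP=> st_valid _; have [Phi_gt0 _] := potential; exact/ltW/Phi_gt0/abrd_step_valid.
have sum_W_le t' st : expensive_running st ->
    \sum_i Phi (step t' i st).1 <= N%:R * (1 - Q^-1) * Phi st.1.
  by case: st => p' b /and3P[/= p'_valid p'_exp /negPf ->]; apply: potential_step_sum_le.
have m_le st : expensive_running st -> K * C ps / B <= Phi st.1.
  case: st => p' b /and3P[/= p'_valid p'_exp _].
  rewrite ler_pdivrMr ?(lt_le_trans ltr01) // [_ * B]mulrC.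
  by apply/ltW/(lt_le_trans p'_exp); case/andP: (Phi_C p' p'_valid).
have := card_runs_in_le (W := fun st => Phi st.1) rate_ge0 W_step_ge0 sum_W_le n t running0 m_le.
set G := [set _ | _]; set X := [set _ | _] => card_le.
have X_le_G : (#|X| <= #|G|)%N.
  by apply/subset_leq_card/fintype.subsetP => cs; rewrite !inE; apply: all_expensive_running.
have B_gt0 : 0 < B by apply: lt_le_trans B_ge1.
apply: le_trans (ler_wpM2l (ltW B_gt0) card_le).
rewrite [Y in _ <= Y]mulrCA [B * _]mulrC divfK ?gt_eqF // ler_wpM2r ?ler_nat //.
by rewrite mulr_ge0 ?total_cost_ge0 ?ltW ?ratio_gt0.
Qed.

Lemma ratio_ge : 0 < C ps -> 2 * rho <= K.
Proof.
move=> Cps_gt0; have [lam_gt0 mu_gt0 _ smooth_le] := smooth.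
have lam_mu : 1 <= lam + mu.
  have := smooth_le _ _ ps_valid ps_valid; under eq_bigr do rewrite upd_id.
  by rewrite -total_cost_indiv // -(ler_pM2r Cps_gt0) mul1r mulrDl.
rewrite ler_pdivlMr ?one_sub_rmu_gt0 //.
have rho_le_r : rho <= r.
  by rewrite ler_peMr ?(le_trans ler01) // expr_ge1 ?e1_ge1 ?(ltW e1_gt0).
have r_ge1 := r_ge1.
have r_lam : r * (1 - mu) <= r * lam by rewrite ler_wpM2l ?(le_trans ler01) //; lra.
have : 0 <= r * mu * (rho - 1).
  by rewrite mulr_ge0 ?subr_ge0 // (mulr_ge0 (le_trans ler01 r_ge1) (ltW mu_gt0)).
lra.
Qed.

Local Notation M := (N%:R `^ alpha_max alpha).

Lemma init_cost_le : C p0 <= rho * M * N%:R * C ps.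
Proof.
have rho_ge0 : 0 <= rho by apply: le_trans rho_ge1.
exact (init_profile_cost_le gnd oracle rho_ge0 ps_valid).
Qed.

Lemma expensive_init_ref_cost_gt0 : expensive p0 -> 0 < C ps.
Proof.
rewrite lt0r total_cost_ge0 andbT; apply: contraTneq => Cps0.
by rewrite /expensive -leNgt Cps0 mulr0; have := init_cost_le; rewrite Cps0 mulr0.
Qed.

Lemma card_expensive_init_runs_le n : (N * Tpar N alpha rho A B mu eps <= n)%N ->
  expensive p0 ->
  #|[set cs : {ffun 'I_n -> 'I_N} |
      all expensive (abrd_run ft br eps 1 (p0, false) (codom cs))]|%:R * (K * C ps)
    <= (N ^ n)%:R * (rho * C ps).
Proof.
move=> n_ge p0_exp; have p0_valid := init_profile_valid gnd oracle.
have [A_ge1 B_ge1 _] := Phi_bounded; have [N_gt0 _ _ _ _] := gnd.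
have L_geN : N%:R <= A * B * M.
  apply: le_trans (natr_le_powR_alpha_max gnd N_gt0) _.
  by rewrite ler_peMl ?powR_ge0 // mulr_ege1.
have decay := expr_1subV_mul_le1 Qpar_ge1 N_gt0 L_geN (le_absz_ceil _) n_ge.
have Phi_p0 : Phi p0 <= A * (rho * M * N%:R * C ps).
  apply: le_trans (potential_le_cost p0_valid) _.
  by rewrite ler_wpM2l ?(le_trans ler01) ?init_cost_le.
apply: le_trans (card_expensive_runs_le n 1 p0_valid p0_exp) _.
apply: (@le_trans _ _ (B * (N%:R ^+ n * (1 - Q^-1) ^+ n * (A * (rho * M * N%:R * C ps))))).
  rewrite exprMn ler_wpM2l ?(le_trans ler01) // ler_wpM2l // mulr_ge0 ?exprn_ge0 //.
  by rewrite subr_ge0 invf_le1 ?Qpar_ge1 // (lt_le_trans ltr01 Qpar_ge1).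
have -> : B * (N%:R ^+ n * (1 - Q^-1) ^+ n * (A * (rho * M * N%:R * C ps))) =
          N%:R ^+ n * (rho * C ps) * ((1 - Q^-1) ^+ n * (A * B * M) * N%:R) by ring.
rewrite natrX -[X in _ <= X]mulr1 ler_wpM2l // mulr_ge0 ?exprn_ge0 //.
by rewrite mulr_ge0 ?total_cost_ge0 // (le_trans ler01).
Qed.

Lemma card_failures_le n : (N * Tpar N alpha rho A B mu eps <= n)%N ->
  (2 * #|[set cs : {ffun 'I_n -> 'I_N} |
           (K * C ps < output_cost w alpha sigma xi ft br eps p0 (codom cs))%R]| <= N ^ n)%N.
Proof.
move=> n_ge; set X := [set cs | _].
have [p0_exp | p0_cheap] := boolP (expensive p0); last first.
  suff -> : #|X| = 0%N by [].
  apply: eq_card0 => cs; rewrite !inE; apply/negbTE; rewrite -leNgt.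
  by apply: le_trans (output_cost_le w alpha sigma xi (mem_head _ _)) _; rewrite leNgt.
have Cps_gt0 := expensive_init_ref_cost_gt0 p0_exp.
have rho_Cps_gt0 : 0 < rho * C ps by rewrite mulr_gt0 // (lt_le_trans ltr01).
have := card_expensive_init_runs_le n_ge p0_exp; set Y := [set _ | _] => Y_le.
have X_le_Y : (#|X| <= #|Y|)%N.
  apply/subset_leq_card/fintype.subsetP => cs; rewrite !inE => fail; apply/allP => p p_in.
  by apply: lt_le_trans fail (output_cost_le w alpha sigma xi _); rewrite in_cons p_in orbT.
rewrite -(ler_nat R) -(ler_pM2r rho_Cps_gt0); apply: le_trans Y_le.
have -> : (2 * #|X|)%:R * (rho * C ps) = #|X|%:R * (2 * rho * C ps) by rewrite natrM; ring.
apply: le_trans (ler_wpM2l (ler0n _ _) (ler_wpM2r (ltW Cps_gt0) (ratio_ge Cps_gt0))) _.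
by rewrite ler_wpM2r ?ler_nat // mulr_ge0 ?total_cost_ge0 ?ltW ?ratio_gt0.
Qed.

Lemma success_prob_ge_half : (forall p, valid P p -> C ps <= C p) ->
  1 / 2 <= success_prob P w alpha sigma xi ft br eps p0 (Tprime N alpha rho A B mu eps) K.
Proof.
move=> ps_min; set n := Tprime _ _ _ _ _ _ _.
have n_ge : (N * Tpar N alpha rho A B mu eps <= n)%N by rewrite /n /Tprime; nia.
have := card_failures_le n_ge; rewrite /success_prob.
set X := [set cs | _]; set S := [set c | _] => X_le.
have notS_le_X : (#|~: S| <= #|X|)%N.
  apply/subset_leq_card/fintype.subsetP => c; rewrite !inE.
  case/forallPn => popt; rewrite negb_imply -ltNge => /andP[popt_valid fail].
  exact: le_lt_trans (ler_wpM2l (ltW ratio_gt0) (ps_min _ popt_valid)) fail.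
have [N_gt0 _ _ _ _] := gnd.
have : (N ^ n <= 2 * #|S|)%N.
  have := cardsC S; rewrite card_ffun !card_ord.
  by move: X_le notS_le_X; move: #|S| #|~: S| #|X| (N ^ n)%N => a b x m; lia.
rewrite -(ler_nat R) natrM => Nn_le.
rewrite ler_pdivlMr ?ltr0n ?expn_gt0 ?N_gt0 //.
by move: Nn_le; move: (N ^ n)%:R #|S|%:R => a b; lra.
Qed.

End ABRD.

Theorem theorem9p2 (R : realType) (E : finType) (N : nat)
  (P : 'I_N -> {set {set E}}) (w : 'I_N -> E -> nat) (q : nat)
  (alpha : 'I_q -> R) (sigma : E -> R) (xi : E -> 'I_q -> R)
  (rho : R) (O : {set {set E}} -> (E -> R) -> {set E})
  (f : 'I_N -> E -> profile E N -> R) (Phi : profile E N -> R)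
  (A B lam mu eps : R)
  (ft : 'I_N -> E -> profile E N -> R)
  (br : nat -> 'I_N -> profile E N -> {set E}) :
  gnd_instance P w alpha sigma xi ->
  1 <= rho -> is_oracle rho O ->
  is_csm P w alpha sigma xi f ->
  is_potential P f Phi -> potential_bounded P w alpha sigma xi Phi A B ->
  is_smooth P w alpha sigma xi f lam mu ->
  0 < eps < 1 ->
  mu < 1 / (rho * eps1 eps ^+ 2) ->
  approx_shares P f ft eps ->
  approx_br P ft rho br ->
  1 / 2 <= success_prob P w alpha sigma xi ft br eps
             (init_profile P w alpha sigma xi O)
             (Tprime N alpha rho A B mu eps)
             (2 * rho * eps1 eps ^+ 2 * lam / (1 - rho * eps1 eps ^+ 2 * mu)).
Proof.
move=> gnd rho_ge1 oracle csm potential Phi_bounded smooth eps_range mu_small approx br_spec.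
have [ps ps_valid ps_min] : exists2 ps, valid P ps &
    forall p, valid P p -> total_cost w alpha sigma xi ps <= total_cost w alpha sigma xi p.
  have p0_valid := init_profile_valid gnd oracle.
  by case: (arg_minP (total_cost w alpha sigma xi) p0_valid) => ps; exists ps.
exact (success_prob_ge_half gnd rho_ge1 oracle csm potential Phi_bounded smooth eps_range
  mu_small approx br_spec ps_valid ps_min).
Qed.
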